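(* Assume the setting below, in which $Q:[0,T_1)\to\mathbb{R}$ is defined by $Q(t)=\int_{B_{R(t)}}\mathbf x\cdot\mathbf u\sqrt{1+|\mathbf u|^2}(\varrho+p+\Pi)\,dx$ for a solution existing on $[0,T_1)$, $E=E(0)>0$, $R(t)=R_0+ct$ with $0<c<1$, and $b$ is the constant below. Suppose $Q$ satisfies on $[0,T_1)$ $$\dot Q\ge E+bR^3-\sqrt{(E+bR^3)^2-\frac{Q^2}{R^2}}-kR^3$$ for some constant $k>0$. Assume there exists $\bar R>R_0$ such that, with $A=c\big(1+\frac{3b\bar R^3}{E+b\bar R^3}\big)$ and $B=\frac{k\bar R^3}{E+b\bar R^3}$, $$A^2+2B-B^2>0,\quad A+B<1,\quad z_0:=\frac{A(1-B)+\sqrt{A^2+2B-B^2}}{A^2+1}<1,$$ $$\int_{\frac12+\frac{z_0}{2}}^1\frac{dz}{1-\sqrt{1-z^2}-Az-B}<\log\Big(\frac{\bar R}{R_0}\Big),\qquad \frac{Q(0)}{R_0(E+bR_0^3)}>\frac{z_0}{2}+\frac12.$$ Then $T_1<(\bar R-R_0)/c$; i.e. $Q$ is necessarily defined only on a finite interval and cannot be extended smoothly, as a function satisfying the differential inequality, up to time $(\bar R-R_0)/c$.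
   Context: Setting: Minkowski space $\mathbb{R}^{1+3}$ ($g=\mathrm{diag}(-1,1,1,1)$), $B_R=\{|x|<R\}$. $(\varrho,n,\Pi,u)$ is a smooth admissible solution of the Müller–Israel–Stewart equations $u^\alpha\partial_\alpha\varrho+(\varrho+p+\Pi)\partial_\alpha u^\alpha=0$, $(\varrho+p+\Pi)u^\beta\partial_\beta u_\alpha+(g_\alpha^\beta+u_\alpha u^\beta)\partial_\beta(p+\Pi)=0$, $u^\alpha\partial_\alpha n+n\partial_\alpha u^\alpha=0$, $\tau_0u^\alpha\partial_\alpha\Pi+\Pi+\lambda\Pi^2+\zeta\partial_\alpha u^\alpha=0$ (values in $\mathcal P=\{\varrho>0,n>0,0<c_s^2<1\}$, $c_s^2=\frac{\zeta}{\tau_0(\varrho+p+\Pi)}+\partial_\varrho p+\frac{n\partial_np}{\varrho+p+\Pi}$), under assumptions (A1)–(A5): (A1) $p,\zeta,\tau_0$ smooth on $\mathbb{R}^+\times\mathbb{R}^+$ with smooth extensions to $\mathbb{R}\times\mathbb{R}^+$, constants $p_0,p_1\ge0$ with $-\varrho\le p\le\varrho+p_1$, $-p_0<p$ at physical states; (A2) $p$ globally Lipschitz on $\mathbb{R}\times\mathbb{R}^+$, $\partial_\varrho p,\partial_np\ne0$ at physical states; (A3) $\zeta\ge0$, $\tau_0>c'>0$ smooth on $\mathbb{R}\times\mathbb{R}^+$, $\partial_\varrho(\zeta/\tau_0),\partial_n(\zeta/\tau_0)$ bounded, $\partial_\varrho(\zeta/\tau_0)\ge0$; (A4) $\int_0^\infty\frac1n\sup_\varrho|\zeta/\tau_0|dn\le\bar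 A$ for a constant $\bar A>0$; (A5) $\lambda\equiv0$ or $\lambda>0$ smooth with $p+\varrho<1/\lambda$ at physical states. The initial data satisfy $\mathring\varrho+p+\mathring\Pi\ge0$ and the solution equals $(\bar\varrho,\bar n,0,\mathbf u=0)$ outside $B_{R(t)}$. $E=\int_{\mathbb{R}^3}\big((\varrho+p+\Pi)(u^0)^2-(p+\Pi)-\bar\varrho\big)dx$ at $t=0$, with $u^0=\sqrt{1+|\mathbf u|^2}$. $b=\frac{4\pi}{3}(\bar\varrho+p_1+\|\mathring\Pi\|_\infty+3\bar A)$. *)

From Stdlib Require Import Reals.
From Coquelicot Require Import Coquelicot.
Open Scope R_scope.

Definition radius (R0 c t : R) : R := R0 + c * t.

Definition constA (c b E Rbar : R) : R :=
  c * (1 + 3 * b * Rbar ^ 3 / (E + b * Rbar ^ 3)).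

Definition constB (k b E Rbar : R) : R := k * Rbar ^ 3 / (E + b * Rbar ^ 3).

Definition z0 (A B : R) : R :=
  (A * (1 - B) + sqrt (A ^ 2 + 2 * B - B ^ 2)) / (A ^ 2 + 1).

Definition integrand (A B z : R) : R := / (1 - sqrt (1 - z ^ 2) - A * z - B).

From Stdlib Require Import Reals Lra Psatz.
From Coquelicot Require Import Coquelicot.
Open Scope R_scope.

(* Set z := Q / (R (E + b R^3)).  Since R^3 / (E + b R^3) increases with R, for R <= Rbar the
   differential inequality becomes z' >= F(z) / R with F(z) = 1 - sqrt(1 - z^2) - A z - B,
   and F > 0 on (z0, 1].  Hence z, starting above (1 + z0) / 2, never comes back below it,
   and d/dt G(z) >= 1 / R >= (ln R)' for G a primitive of 1 / F.  As z <= 1 this bounds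
   ln (R(t) / R0) by the integral of 1 / F over [(1 + z0) / 2, 1], which is smaller than
   ln (Rbar / R0): the radius can never reach Rbar while the solution exists. *)

Lemma le_of_derive_nonneg (g dg : R -> R) a b : a <= b ->
  (forall x, a <= x <= b -> continuous g x) ->
  (forall x, a < x < b -> is_derive g x (dg x)) ->
  (forall x, a < x < b -> 0 <= dg x) -> g a <= g b.
Proof.
  intros Hab Hc Hd Hp.
  destruct (MVT_gen g a b (fun x => Rmax 0 (dg x))) as [x [_ Hx]];
    rewrite ?Rmin_left, ?Rmax_right by lra.
  - intros x Hx. rewrite Rmax_right by (apply Hp; lra). auto.
  - intros x Hx. apply continuity_pt_filterlim, Hc; lra.
  - pose proof (Rmax_l 0 (dg x)). nra.
Qed.

Lemma continuous_gt_near (g : R -> R) x L : continuous g x -> L < g x ->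
  exists d, 0 < d /\ forall v, Rabs (v - x) < d -> L < g v.
Proof.
  intros Hc Hx.
  apply continuity_pt_filterlim in Hc. rewrite continuity_pt_locally in Hc.
  destruct (Hc (mkposreal (g x - L) ltac:(lra))) as [d Hd].
  exists d. split; [apply cond_pos|]. intros v Hv.
  specialize (Hd v Hv). apply Rabs_lt_between in Hd. simpl in Hd. lra.
Qed.

Lemma first_hitting_time (g : R -> R) a s L : a <= s -> L < g a -> g s <= L ->
  (forall x, a <= x <= s -> continuous g x) ->
  exists tau, a < tau <= s /\ g tau <= L /\ forall v, a <= v < tau -> L < g v.
Proof.
  intros Has Ha Hs Hc.
  set (S := fun u => a <= u <= s /\ forall v, a <= v <= u -> L < g v).
  assert (Sa : S a).
  { split; [lra|]. intros v Hv. replace v with a by lra. exact Ha. }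
  destruct (completeness S) as [tau [Hub Hlub]].
  { exists s. intros u [Hu _]. lra. }
  { now exists a. }
  assert (Hat : a <= tau) by now apply Hub.
  assert (Hts : tau <= s) by (apply Hlub; intros u [Hu _]; lra).
  assert (Hbelow : forall v, a <= v < tau -> L < g v).
  { intros v Hv.
    destruct (Classical_Prop.classic (exists u, S u /\ v < u)) as [[u [[_ Hu] Hvu]]|Hn].
    - apply Hu. lra.
    - assert (tau <= v) by (apply Hlub; intros u Su; apply Rnot_lt_le; eauto). lra. }
  assert (Htau : g tau <= L).
  { apply Rnot_lt_le. intros Hgt.
    assert (Hne : tau <> s) by (intros ->; lra).
    destruct (continuous_gt_near g tau L (Hc tau ltac:(lra)) Hgt) as [d [Hd Hnear]].
    set (u := Rmin (tau + d / 2) s).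
    assert (Hu1 : u <= tau + d / 2) by apply Rmin_l.
    assert (Hu2 : u <= s) by apply Rmin_r.
    assert (Htu : tau < u) by (apply Rmin_glb_lt; lra).
    assert (Su : S u).
    { split; [lra|]. intros v Hv. destruct (Rlt_or_le v tau).
      - apply Hbelow. lra.
      - apply Hnear. rewrite Rabs_right; lra. }
    specialize (Hub u Su). lra. }
  exists tau. repeat split; auto.
  destruct (Req_dec a tau) as [<-|]; lra.
Qed.

Lemma gt_preserved_of_derive_nonneg (g : R -> R) a b L : L < g a ->
  (forall x, a <= x <= b -> continuous g x) ->
  (forall x, a < x < b -> ex_derive g x) ->
  (forall x, a < x < b -> L < g x -> 0 <= Derive g x) ->
  forall x, a <= x <= b -> L < g x.
Proof.
  intros Ha Hc Hd Hp s Hs. apply Rnot_le_lt. intros Hgs.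
  destruct (first_hitting_time g a s L) as [tau [Htau [Hgtau Habove]]]; auto; try lra.
  { intros x Hx. apply Hc. lra. }
  assert (g a <= g tau); [|lra].
  apply (le_of_derive_nonneg g (Derive g)); try lra.
  - intros x Hx. apply Hc. lra.
  - intros x Hx. apply Derive_correct, Hd. lra.
  - intros x Hx. apply Hp; [lra|]. apply Habove. lra.
Qed.

Lemma radius_pos R0 c s : 0 < R0 -> 0 <= c -> 0 <= s -> 0 < radius R0 c s.
Proof. intros. unfold radius. nra. Qed.

Definition denom (A B z : R) : R := 1 - sqrt (1 - z ^ 2) - A * z - B.

Section Integrand.

Variables A B : R.
Hypothesis hA : 0 < A.
Hypothesis hD : A ^ 2 + 2 * B - B ^ 2 > 0.

(* [(A^2+1) ((1-B-Ay)^2 - (1-y^2)) = (y (A^2+1) - A (1-B))^2 - (A^2+2B-B^2)]: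
   [z0 A B] is the largest root of [denom A B] once the square root is squared away. *)
Lemma denom_pos y : z0 A B < y < (1 - B) / A -> 0 < denom A B y.
Proof.
  intros [Hz Hy]. unfold denom.
  assert (Hlin : 0 < 1 - B - A * y).
  { apply (Rmult_lt_compat_l A) in Hy; [|lra].
    replace (A * ((1 - B) / A)) with (1 - B) in Hy by (field; lra). lra. }
  destruct (Rle_or_lt (1 - y ^ 2) 0) as [Hn|Hp].
  { rewrite sqrt_neg_0 by lra. lra. }
  unfold z0 in Hz.
  set (D := A ^ 2 + 2 * B - B ^ 2) in *.
  assert (HA1 : 0 < A ^ 2 + 1) by nra.
  assert (Hw : A * (1 - B) + sqrt D < y * (A ^ 2 + 1)).
  { apply (Rmult_lt_compat_r (A ^ 2 + 1)) in Hz; [|lra].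
    unfold Rdiv in Hz. rewrite Rmult_assoc, Rinv_l in Hz by lra. lra. }
  pose proof (sqrt_pos D). pose proof (sqrt_sqrt D ltac:(lra)).
  pose proof (sqrt_pos (1 - y ^ 2)). pose proof (sqrt_sqrt (1 - y ^ 2) ltac:(lra)).
  assert (Hsq : (1 - B - A * y) ^ 2 > 1 - y ^ 2).
  { assert (((1 - B - A * y) ^ 2 - (1 - y ^ 2)) * (A ^ 2 + 1)
            = (y * (A ^ 2 + 1) - A * (1 - B)) ^ 2 - D) by (unfold D; ring).
    nra. }
  nra.
Qed.

Lemma integrand_continuous y : z0 A B < y < (1 - B) / A -> continuous (integrand A B) y.
Proof.
  intros Hy. apply (continuous_Rinv_comp (denom A B)).
  2: { pose proof (denom_pos y Hy). lra. }
  apply (continuous_ext (fun z => minus (1 - A * z - B) (sqrt (1 - z ^ 2)))).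
  { intros z. unfold denom, minus, plus, opp. simpl. ring. }
  apply (continuous_minus (V := R_NormedModule)).
  - apply ex_derive_continuous. auto_derive. auto.
  - apply (continuous_comp (U := R_UniformSpace) (V := R_UniformSpace)
             (W := R_UniformSpace) (fun z => 1 - z ^ 2) sqrt).
    + apply (ex_derive_continuous (K := R_AbsRing) (V := R_NormedModule)). auto_derive. auto.
    + apply continuous_sqrt.
Qed.

Lemma is_derive_RInt_integrand z1 x :
  z0 A B < z1 < (1 - B) / A -> z0 A B < x < (1 - B) / A ->
  is_derive (fun y => RInt (integrand A B) z1 y) x (integrand A B x).
Proof.
  intros Hz1 Hx.
  apply (is_derive_RInt (V := R_NormedModule) _ _ z1); [|now apply integrand_continuous].
  set (d := Rmin (x - z0 A B) ((1 - B) / A - x)).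
  assert (Hd : 0 < d) by (apply Rmin_glb_lt; lra).
  assert (Hd1 : d <= x - z0 A B) by apply Rmin_l.
  assert (Hd2 : d <= (1 - B) / A - x) by apply Rmin_r.
  exists (mkposreal d Hd). intros y Hy.
  change (Rabs (y - x) < d) in Hy. apply Rabs_lt_between in Hy.
  apply (RInt_correct (V := R_CompleteNormedModule)),
    (ex_RInt_continuous (V := R_CompleteNormedModule)).
  intros z Hz. apply integrand_continuous.
  pose proof (Rmin_l z1 y). pose proof (Rmin_r z1 y).
  pose proof (Rmax_l z1 y). pose proof (Rmax_r z1 y).
  destruct (Rle_or_lt z1 y);
    [rewrite Rmin_left, Rmax_right in Hz | rewrite Rmin_right, Rmax_left in Hz]; lra.
Qed.

Hypothesis hAB : A + B < 1.

Lemma one_lt_linear_root : 1 < (1 - B) / A.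
Proof. apply (Rmult_lt_reg_l A); [lra|]. field_simplify; lra. Qed.

Lemma z0_pos : 0 < z0 A B.
Proof.
  pose proof (sqrt_pos (A ^ 2 + 2 * B - B ^ 2)).
  unfold z0. apply Rdiv_lt_0_compat; nra.
Qed.

Section Comparison.

Variables (R0 c z1 t : R) (z : R -> R).
Hypothesis hR0 : 0 < R0.
Hypothesis hc : 0 <= c <= 1.
Hypothesis ht : 0 <= t.
Hypothesis hz1 : z0 A B < z1.
Hypothesis hzcont : forall s, 0 <= s <= t -> continuous z s.
Hypothesis hzder : forall s, 0 < s < t -> ex_derive z s.
Hypothesis hzle1 : forall s, 0 <= s <= t -> z s <= 1.
Hypothesis hzineq : forall s, 0 < s < t -> z1 < z s ->
  denom A B (z s) / radius R0 c s <= Derive z s.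
Hypothesis hz0 : z1 < z 0.

Let radius_pos_on s : 0 <= s -> 0 < radius R0 c s.
Proof. intros. apply radius_pos; lra. Qed.

Lemma stays_above s : 0 <= s <= t -> z1 < z s.
Proof.
  pose proof one_lt_linear_root.
  apply (gt_preserved_of_derive_nonneg z 0 t z1 hz0 hzcont hzder).
  intros x Hx Hzx.
  pose proof (hzineq x Hx Hzx). pose proof (hzle1 x ltac:(lra)).
  pose proof (denom_pos (z x) ltac:(lra)). pose proof (radius_pos_on x ltac:(lra)).
  assert (0 < denom A B (z x) / radius R0 c x) by (apply Rdiv_lt_0_compat; lra).
  lra.
Qed.

Let G y := RInt (integrand A B) z1 y.

Let is_derive_G y : z1 <= y <= 1 -> is_derive G y (integrand A B y).
Proof. pose proof one_lt_linear_root. intros Hy. apply is_derive_RInt_integrand; lra. Qed.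

Let G_le u v : z1 <= u <= v -> v <= 1 -> G u <= G v.
Proof.
  pose proof one_lt_linear_root. intros Huv Hv.
  apply (le_of_derive_nonneg G (integrand A B)); try lra.
  - intros x Hx. apply (ex_derive_continuous (K := R_AbsRing) (V := R_NormedModule)).
    eexists. apply is_derive_G. lra.
  - intros x Hx. apply is_derive_G. lra.
  - intros x Hx. left. apply Rinv_0_lt_compat, denom_pos. lra.
Qed.

Let rate_le s : 0 < s < t -> c / radius R0 c s <= Derive z s * integrand A B (z s).
Proof.
  intros Hs. pose proof one_lt_linear_root.
  pose proof (stays_above s ltac:(lra)) as Habove. pose proof (hzle1 s ltac:(lra)).
  pose proof (radius_pos_on s ltac:(lra)).
  pose proof (hzineq s Hs Habove) as Hder.
  pose proof (denom_pos (z s) ltac:(lra)) as Hden.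
  set (F := denom A B (z s)) in *. set (Rs := radius R0 c s) in *.
  change (integrand A B (z s)) with (/ F).
  assert (Hrate : / Rs <= Derive z s * / F).
  { replace (/ Rs) with (F / Rs * / F) by (field; lra).
    apply Rmult_le_compat_r; [left; apply Rinv_0_lt_compat|]; lra. }
  assert (c / Rs <= / Rs).
  { unfold Rdiv. rewrite <- (Rmult_1_l (/ Rs)) at 2.
    apply Rmult_le_compat_r; [left; apply Rinv_0_lt_compat|]; lra. }
  lra.
Qed.

Let G_minus_ln_radius_le :
  G (z 0) - ln (radius R0 c 0) <= G (z t) - ln (radius R0 c t).
Proof.
  pose proof one_lt_linear_root.
  apply (le_of_derive_nonneg (fun s => G (z s) - ln (radius R0 c s))
           (fun s => Derive z s * integrand A B (z s) - c / radius R0 c s)); [lra| | |].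
  - intros x Hx.
    pose proof (stays_above x Hx). pose proof (hzle1 x Hx). pose proof (radius_pos_on x ltac:(lra)).
    apply (continuous_minus (V := R_NormedModule)).
    + apply (continuous_comp (U := R_UniformSpace) (V := R_UniformSpace)
               (W := R_UniformSpace) z G); [now apply hzcont|].
      apply (ex_derive_continuous (K := R_AbsRing) (V := R_NormedModule)).
      eexists. apply is_derive_G. lra.
    + apply (ex_derive_continuous (K := R_AbsRing) (V := R_NormedModule)
               (fun s => ln (radius R0 c s))).
      unfold radius in *. auto_derive. lra.
  - intros x Hx.
    pose proof (stays_above x ltac:(lra)). pose proof (hzle1 x ltac:(lra)).
    pose proof (radius_pos_on x ltac:(lra)).
    apply (is_derive_minus (fun s => G (z s)) (fun s => ln (radius R0 c s))).
    + apply (is_derive_comp G z); [apply is_derive_G; lra|].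
      apply Derive_correct, hzder, Hx.
    + unfold radius in *. auto_derive; [lra|]. field. lra.
  - intros x Hx. pose proof (rate_le x Hx). lra.
Qed.

Lemma ln_radius_le_RInt_integrand : ln (radius R0 c t / R0) <= RInt (integrand A B) z1 1.
Proof.
  pose proof G_minus_ln_radius_le as Hmono.
  pose proof (stays_above 0 ltac:(lra)). pose proof (hzle1 0 ltac:(lra)).
  pose proof (stays_above t ltac:(lra)). pose proof (hzle1 t ltac:(lra)).
  assert (G z1 <= G (z 0)) by (apply G_le; lra).
  assert (G (z t) <= G 1) by (apply G_le; lra).
  assert (G z1 = 0) by exact (RInt_point (V := R_CompleteNormedModule) z1 (integrand A B)).
  replace (radius R0 c 0) with R0 in Hmono by (unfold radius; ring).
  rewrite ln_div by (try apply radius_pos_on; lra).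
  fold (G 1). lra.
Qed.

End Comparison.

End Integrand.

Lemma cube_ratio_le E b r Rbar : 0 < E -> 0 <= b -> 0 < r <= Rbar ->
  r ^ 3 / (E + b * r ^ 3) <= Rbar ^ 3 / (E + b * Rbar ^ 3).
Proof.
  intros HE Hb Hr.
  assert (r ^ 3 <= Rbar ^ 3) by (apply pow_incr; lra).
  assert (0 < E + b * r ^ 3) by (pose proof (pow_lt r 3); nra).
  assert (0 < E + b * Rbar ^ 3) by nra.
  apply Rmult_le_reg_r with ((E + b * r ^ 3) * (E + b * Rbar ^ 3)); [nra|].
  field_simplify; nra.
Qed.

Lemma constA_pos c b E Rbar : 0 < c -> 0 < E -> 0 < b -> 0 < Rbar -> 0 < constA c b E Rbar.
Proof.
  intros Hc HE Hb HR. pose proof (pow_lt Rbar 3 HR).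
  assert (0 <= 3 * b * Rbar ^ 3 / (E + b * Rbar ^ 3)) by (apply Rle_mult_inv_pos; nra).
  unfold constA. nra.
Qed.

Section Normalization.

Variables (E b k c R0 Rbar T : R) (Q : R -> R).
Hypothesis hE : 0 < E.
Hypothesis hb : 0 < b.
Hypothesis hk : 0 < k.
Hypothesis hc0 : 0 < c.
Hypothesis hc1 : c <= 1.
Hypothesis hR0 : 0 < R0.
Hypothesis hQcont : forall t, 0 <= t < T -> continuous Q t.
Hypothesis hQder : forall t, 0 < t < T -> ex_derive Q t.
Hypothesis hdom : forall t, 0 <= t < T ->
  (Q t) ^ 2 / (radius R0 c t) ^ 2 <= (E + b * (radius R0 c t) ^ 3) ^ 2.
Hypothesis hineq : forall t, 0 < t < T ->
  Derive Q t >=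
    E + b * (radius R0 c t) ^ 3
    - sqrt ((E + b * (radius R0 c t) ^ 3) ^ 2 - (Q t) ^ 2 / (radius R0 c t) ^ 2)
    - k * (radius R0 c t) ^ 3.
Hypothesis hAB1 : (constA c b E Rbar) ^ 2 + 2 * constB k b E Rbar - (constB k b E Rbar) ^ 2 > 0.
Hypothesis hAB2 : constA c b E Rbar + constB k b E Rbar < 1.

Local Notation Rad t := (radius R0 c t).
Local Notation P t := (E + b * Rad t ^ 3).

Definition normalized_momentum t := Q t / (Rad t * P t).

Let radius_pos_on t : 0 <= t -> 0 < Rad t.
Proof. intros Ht. apply radius_pos; lra. Qed.

Lemma energy_bound_pos t : 0 <= t -> 0 < P t.
Proof. intros Ht. pose proof (pow_lt _ 3 (radius_pos_on t Ht)). nra. Qed.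

Lemma normalized_momentum_continuous t : 0 <= t < T -> continuous normalized_momentum t.
Proof.
  intros Ht. pose proof (radius_pos_on t ltac:(lra)). pose proof (energy_bound_pos t ltac:(lra)).
  apply (continuous_mult (K := R_AbsRing) Q (fun s => / (Rad s * P s))); [now apply hQcont|].
  apply (continuous_Rinv_comp (fun s => Rad s * P s)); [|nra].
  apply (ex_derive_continuous (K := R_AbsRing) (V := R_NormedModule)).
  unfold radius. auto_derive. auto.
Qed.

Lemma normalized_momentum_le_1 t : 0 <= t < T -> normalized_momentum t <= 1.
Proof.
  intros Ht. pose proof (radius_pos_on t ltac:(lra)). pose proof (energy_bound_pos t ltac:(lra)).
  specialize (hdom t Ht).
  assert (normalized_momentum t ^ 2 <= 1); [|nra].
  unfold normalized_momentum.
  replace ((Q t / (Rad t * P t)) ^ 2) with (Q t ^ 2 / Rad t ^ 2 / P t ^ 2) by (field; lra).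
  apply Rmult_le_reg_r with (P t ^ 2); [nra|]. field_simplify; nra.
Qed.

(* [d/dt (R P) = c (P + 3 b R^3)] because [R' = c]. *)
Lemma is_derive_normalized_momentum t : 0 < t < T ->
  is_derive normalized_momentum t
    ((Derive Q t - normalized_momentum t * (c * (P t + 3 * b * Rad t ^ 3))) / (Rad t * P t)).
Proof.
  intros Ht. pose proof (radius_pos_on t ltac:(lra)). pose proof (energy_bound_pos t ltac:(lra)).
  unfold normalized_momentum, radius in *. auto_derive.
  - split; [now apply hQder|]. split; [nra|auto].
  - change (fun s => Q s) with Q. field. split; lra.
Qed.

Lemma growth_rate_le_constA t : 0 <= t -> Rad t <= Rbar ->
  c * (P t + 3 * b * Rad t ^ 3) <= P t * constA c b E Rbar.
Proof.
  intros Ht HR. pose proof (radius_pos_on t Ht). pose proof (energy_bound_pos t Ht).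
  pose proof (cube_ratio_le E b (Rad t) Rbar hE ltac:(lra) ltac:(lra)) as Hratio.
  unfold constA.
  replace (c * (P t + 3 * b * Rad t ^ 3))
    with (P t * (c * (1 + 3 * b * (Rad t ^ 3 / P t)))) by (field; lra).
  apply Rmult_le_compat_l; [lra|].
  apply Rmult_le_compat_l; [lra|]. unfold Rdiv in *. nra.
Qed.

Lemma loss_le_constB t : 0 <= t -> Rad t <= Rbar -> k * Rad t ^ 3 <= P t * constB k b E Rbar.
Proof.
  intros Ht HR. pose proof (radius_pos_on t Ht). pose proof (energy_bound_pos t Ht).
  pose proof (cube_ratio_le E b (Rad t) Rbar hE ltac:(lra) ltac:(lra)) as Hratio.
  unfold constB.
  replace (k * Rad t ^ 3) with (P t * (k * (Rad t ^ 3 / P t))) by (field; lra).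
  apply Rmult_le_compat_l; [lra|]. unfold Rdiv in *. nra.
Qed.

Lemma derive_normalized_momentum_ge t : 0 < t < T -> Rad t <= Rbar -> 0 <= normalized_momentum t ->
  denom (constA c b E Rbar) (constB k b E Rbar) (normalized_momentum t) / Rad t
  <= Derive normalized_momentum t.
Proof.
  intros Ht HR Hz.
  rewrite (is_derive_unique _ _ _ (is_derive_normalized_momentum t Ht)).
  pose proof (radius_pos_on t ltac:(lra)). pose proof (energy_bound_pos t ltac:(lra)).
  pose proof (growth_rate_le_constA t ltac:(lra) HR) as HA.
  pose proof (loss_le_constB t ltac:(lra) HR) as HB.
  specialize (hineq t Ht).
  assert (Hsqrt : sqrt (P t ^ 2 - Q t ^ 2 / Rad t ^ 2)
                  = P t * sqrt (1 - normalized_momentum t ^ 2)).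
  { replace (P t ^ 2 - Q t ^ 2 / Rad t ^ 2) with (P t ^ 2 * (1 - normalized_momentum t ^ 2))
      by (unfold normalized_momentum; field; lra).
    rewrite sqrt_mult_alt, sqrt_pow2; nra. }
  rewrite Hsqrt in hineq.
  set (z := normalized_momentum t) in *. set (S := sqrt (1 - z ^ 2)) in *.
  unfold denom. fold S.
  apply Rmult_le_reg_r with (Rad t * P t); [nra|].
  replace ((1 - S - constA c b E Rbar * z - constB k b E Rbar) / Rad t * (Rad t * P t))
    with (P t * (1 - S) - z * (P t * constA c b E Rbar) - P t * constB k b E Rbar)
    by (field; lra).
  replace ((Derive Q t - z * (c * (P t + 3 * b * Rad t ^ 3))) / (Rad t * P t) * (Rad t * P t))
    with (Derive Q t - z * (c * (P t + 3 * b * Rad t ^ 3))) by (field; lra).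
  nra.
Qed.

Lemma ln_radius_le_RInt z1 t : z0 (constA c b E Rbar) (constB k b E Rbar) < z1 ->
  0 <= t < T -> Rad t <= Rbar -> z1 < normalized_momentum 0 ->
  ln (Rad t / R0) <= RInt (integrand (constA c b E Rbar) (constB k b E Rbar)) z1 1.
Proof.
  intros Hz1 Ht HR Hzero. pose proof (radius_pos_on t ltac:(lra)).
  assert (hA : 0 < constA c b E Rbar) by (apply constA_pos; lra).
  pose proof (z0_pos _ _ hA hAB2).
  apply (ln_radius_le_RInt_integrand _ _ hA hAB1 hAB2 R0 c z1 t normalized_momentum); auto; try lra.
  - intros s Hs. apply normalized_momentum_continuous. lra.
  - intros s Hs. eexists. apply is_derive_normalized_momentum. lra.
  - intros s Hs. apply normalized_momentum_le_1. lra.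
  - intros s Hs Hzs. apply derive_normalized_momentum_ge; try lra.
    pose proof (Rmult_lt_compat_l c s t hc0 (proj2 Hs)). unfold radius in *. lra.
Qed.

End Normalization.

Lemma exists_between_ln_ratio I R0 Rbar : 0 < R0 < Rbar -> I < ln (Rbar / R0) ->
  exists r, R0 < r < Rbar /\ I < ln (r / R0).
Proof.
  intros HR HI.
  assert (Hlog : 0 < ln (Rbar / R0)).
  { rewrite <- ln_1. apply ln_increasing; [lra|].
    apply (Rmult_lt_reg_l R0); [lra|]. field_simplify; lra. }
  set (m := (Rmax I 0 + ln (Rbar / R0)) / 2).
  pose proof (Rmax_l I 0). pose proof (Rmax_r I 0).
  pose proof (Rmax_lub_lt I 0 (ln (Rbar / R0)) HI Hlog).
  assert (Hexp : 1 < exp m < Rbar / R0).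
  { rewrite <- exp_0, <- (exp_ln (Rbar / R0)) by (apply Rdiv_lt_0_compat; lra).
    split; apply exp_increasing; unfold m; lra. }
  exists (R0 * exp m). split.
  - split; [nra|]. replace Rbar with (R0 * (Rbar / R0)) by (field; lra). nra.
  - replace (R0 * exp m / R0) with (exp m) by (field; lra).
    rewrite ln_exp. unfold m. lra.
Qed.

Theorem mainTheorem10
  (E b k c R0 Rbar T1 : R) (Q : R -> R)
  (hE : 0 < E) (hb : 0 < b) (hk : 0 < k)
  (hc0 : 0 < c) (hc1 : c < 1) (hR0 : 0 < R0) (hRbar : R0 < Rbar)
  (* Q is continuous on [0,T1) *)
  (hQcont : forall t, 0 <= t < T1 -> continuous Q t)
  (* Q is differentiable on (0,T1) *)
  (hQder : forall t, 0 < t < T1 -> ex_derive Q t)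
  (* the square root in the differential inequality is well defined *)
  (hdom : forall t, 0 <= t < T1 ->
     (Q t) ^ 2 / (radius R0 c t) ^ 2 <= (E + b * (radius R0 c t) ^ 3) ^ 2)
  (* the differential inequality *)
  (hineq : forall t, 0 < t < T1 ->
     Derive Q t >=
       E + b * (radius R0 c t) ^ 3
       - sqrt ((E + b * (radius R0 c t) ^ 3) ^ 2 - (Q t) ^ 2 / (radius R0 c t) ^ 2)
       - k * (radius R0 c t) ^ 3)
  (hAB1 : (constA c b E Rbar) ^ 2 + 2 * constB k b E Rbar - (constB k b E Rbar) ^ 2 > 0)
  (hAB2 : constA c b E Rbar + constB k b E Rbar < 1)
  (hz0 : z0 (constA c b E Rbar) (constB k b E Rbar) < 1)
  (hint : RInt (integrand (constA c b E Rbar) (constB k b E Rbar))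
            (1 / 2 + z0 (constA c b E Rbar) (constB k b E Rbar) / 2) 1
          < ln (Rbar / R0))
  (hQ0 : Q 0 / (R0 * (E + b * R0 ^ 3))
          > z0 (constA c b E Rbar) (constB k b E Rbar) / 2 + 1 / 2) :
  T1 < (Rbar - R0) / c.
Proof.
  set (z1 := 1 / 2 + z0 (constA c b E Rbar) (constB k b E Rbar) / 2) in *.
  assert (Hz1 : z0 (constA c b E Rbar) (constB k b E Rbar) < z1) by (unfold z1; lra).
  apply Rnot_le_lt. intros HT.
  destruct (exists_between_ln_ratio _ R0 Rbar ltac:(lra) hint) as [r [Hr Hln]].
  set (t := (r - R0) / c).
  assert (Hrt : radius R0 c t = r) by (unfold radius, t; field; lra).
  assert (Ht : 0 < t < T1).
  { split; [apply Rdiv_lt_0_compat; lra|].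
    apply Rlt_le_trans with ((Rbar - R0) / c); [|exact HT].
    apply Rmult_lt_compat_r; [apply Rinv_0_lt_compat|]; lra. }
  assert (Hzero : z1 < normalized_momentum E b c R0 Q 0).
  { unfold normalized_momentum, radius, z1. rewrite Rmult_0_r, Rplus_0_r. lra. }
  pose proof (ln_radius_le_RInt E b k c R0 Rbar T1 Q hE hb hk hc0 ltac:(lra) hR0
                hQcont hQder hdom hineq hAB1 hAB2 z1 t Hz1 ltac:(lra) ltac:(lra) Hzero)
    as Hbound.
  rewrite Hrt in Hbound. lra.
Qed.
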